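(* Let $G$ be a group, $H\le G$ with $[G:H]=m$, and $f_1,\dots,f_s:H\to G$ homomorphisms such that $G$ is self-similar and finite-state with respect to the $G$-data $((m,\dots,m),(H,\dots,H),(f_1,\dots,f_s))$ ($s$ entries each). Consider the following two $G^s$-data: (1) $((m^s,\dots,m^s),(H^s,\dots,H^s),(\rho_1,\dots,\rho_s))$ ($s$ entries each), where for $j=1,\dots,s$ the homomorphism $\rho_j:H^s\to G^s$ is $(h_1,\dots,h_s)\mapsto(h_1^{f_{j}},h_2^{f_{j+1}},\dots,h_s^{f_{j+s-1}})$, indices of the $f$'s taken modulo $s$ in $\{1,\dots,s\}$; (2) $((m^s,1),(H^s,G^s),(\rho,\tau))$, where $\rho:H^s\to G^s$, $(h_1,\dots,h_s)\mapsto(h_1^{f_1},\dots,h_s^{f_s})$, and $\tau:G^s\to G^s$, $(g_1,\dots,g_s)\mapsto(g_s,g_1,\dots,g_{s-1})$. Then each of these data is simple and $G^s$ is finite-state with respect to each of them.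
   Context: For $m\ge2$, $\mathcal A_m$ is the automorphism group of the one-rooted $m$-regular tree; each $\alpha\in\mathcal A_m$ is written $\alpha=(\alpha_1,\dots,\alpha_m)\sigma(\alpha)$ with $\sigma(\alpha)\in S_m$ the first-level action and $\alpha_i$ the states; $Q(\alpha)=\{\alpha\}\cup\bigcup_iQ(\alpha_i)$, $\alpha$ is finite-state if $Q(\alpha)$ is finite, and $\mathcal F_m$ is the group of finite-state automorphisms. Conventions: maps written on the right ($h^f$). A $G$-data $(\mathbf m,\mathbf H,\mathbf F)$ consists of subgroups $H_1,\dots,H_s$ with $[G:H_i]=m_i$, $m=\sum m_i$, and homomorphisms (virtual endomorphisms) $f_i:H_i\to G$. Choosing right transversals $T_i$ of $H_i$, with $\theta_i(g,t)=tg(t')^{-1}$ where $H_it'=H_itg$ and $g^\sigma$ the permutation $t\mapsto t'$ of $T_1\sqcup\dots\sqcup T_s\cong\{1,\dots,m\}$, the data induces $\varphi:G\to\mathcal A_m$, $g^\varphi=((\theta_i(g,t)^{f_i})^\varphi\mid t\in T_i,1\le i\le s)\,g^\sigma$, whose kernel is the $\mathbf F$-core: the largest subgroup of $\bigcap_iH_i$ normal in $G$ and $f_i$-invariant for all $i$ ($K$ is $f$-invariant if $K\subseteq\mathrm{dom}(f)$ and $K^f\le K$). The data is simple if the $\mathbf F$-core is trivial; the group is then self-similar with respect to it, and it is finite-state with respect to it if for some choice of transversals its image under $\varphi$ lies in $\mathcal F_m$. *)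

From Stdlib Require Import ClassicalEpsilon FunctionalExtensionality.
From mathcomp Require Import all_boot.
Set Implicit Arguments. Unset Strict Implicit. Unset Printing Implicit Defensive.

Record grp := Grp {
  gcar :> Type;
  gmul : gcar -> gcar -> gcar;
  gone : gcar;
  ginv : gcar -> gcar;
  gmulA : forall x y z, gmul x (gmul y z) = gmul (gmul x y) z;
  gmul1 : forall x, gmul gone x = x;
  gmulg1 : forall x, gmul x gone = x;
  gmulV : forall x, gmul (ginv x) x = gone;
  gmulgV : forall x, gmul x (ginv x) = gone }.

Section GroupDefs.
Variable G : grp.
Local Notation "x * y" := (gmul x y).
Local Notation "x ^-1" := (ginv x).
Local Notation "1" := (gone G).

Definition is_subgroup (H : G -> Prop) :=
  H 1 /\ (forall a b, H a -> H b -> H (a * b)) /\ (forall a, H a -> H (a^-1)).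

(* right cosets: H a = H b  iff  a * b^-1 \in H *)
Definition index (H : G -> Prop) (n : nat) :=
  exists tr : 'I_n -> G, forall g : G, exists! x, H (g * (tr x)^-1).

(* a homomorphism H -> G, given as a function on G whose values outside H are
   irrelevant *)
Definition hom_on (H : G -> Prop) (f : G -> G) :=
  forall a b, H a -> H b -> f (a * b) = f a * f b.

Definition normal (K : G -> Prop) := forall k g, K k -> K (g^-1 * k * g).
End GroupDefs.

Record data (G : grp) := Data {
  dn : nat;
  dm : 'I_dn -> nat;
  dH : 'I_dn -> G -> Prop;
  df : 'I_dn -> G -> G }.
Arguments dn {G} d.
Arguments dm {G} d i.
Arguments dH {G} d i _.
Arguments df {G} d i _.

Definition is_data (G : grp) (D : data G) :=
  forall i, is_subgroup (dH D i) /\ index (dH D i) (dm D i) /\ hom_on (dH D i) (df D i).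

(* The data is simple iff its F-core (the largest subgroup of /\_i H_i that is
   normal in G and f_i-invariant for all i) is trivial, i.e. every such subgroup
   is trivial. *)
Definition simple (G : grp) (D : data G) :=
  forall K : G -> Prop, is_subgroup K -> normal K ->
    (forall i k, K k -> dH D i k) ->
    (forall i k, K k -> K (df D i k)) ->
    forall k, K k -> k = gone G.

Definition asb (P : Prop) : bool :=
  if excluded_middle_informative P then true else false.

(* Letters of the tree are 'I_M; letter x belongs to component c x and
   represents the transversal element tr x of H_(c x). *)
Definition transversal_ok (G : grp) (D : data G) (M : nat)
    (c : 'I_M -> 'I_(dn D)) (tr : 'I_M -> G) :=
  (forall i, #|[pred x | c x == i]| = dm D i) /\
  (forall i (g : G), exists! x, c x = i /\ dH D i (gmul g (ginv (tr x)))).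

Arguments transversal_ok {G} D {M} c tr.

Definition cosrep (G : grp) (D : data G) (M : nat)
    (c : 'I_M -> 'I_(dn D)) (tr : 'I_M -> G) (x : 'I_M) (g : G) : 'I_M :=
  odflt x [pick y | (c y == c x) &&
                    asb (dH D (c x) (gmul (gmul (tr x) g) (ginv (tr y))))].

(* action of g^phi on words:
   (x w)^(g^phi) = x^(g^sigma) w^((theta(g,x)^(f_i))^phi) *)
Fixpoint phi (G : grp) (D : data G) (M : nat)
    (c : 'I_M -> 'I_(dn D)) (tr : 'I_M -> G) (w : seq 'I_M) (g : G) : seq 'I_M :=
  match w with
  | [::] => [::]
  | x :: w' =>
      let y := @cosrep G D M c tr x g in
      y :: @phi G D M c tr w' (df D (c x) (gmul (gmul (tr x) g) (ginv (tr y))))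
  end.

Arguments phi {G} D {M} c tr w g.

(* state (section) of alpha at vertex u: (u w)^alpha = u^alpha w^(alpha_u) *)
Definition state (A : Type) (alpha : seq A -> seq A) (u : seq A) : seq A -> seq A :=
  fun w => drop (size u) (alpha (u ++ w)).

Definition finite_state (A : Type) (alpha : seq A -> seq A) :=
  exists (n : nat) (L : 'I_n -> seq A -> seq A),
    forall u, exists k, state alpha u = L k.

Definition finite_state_wrt (G : grp) (D : data G) :=
  exists (M : nat) (c : 'I_M -> 'I_(dn D)) (tr : 'I_M -> G),
    transversal_ok D c tr /\ forall g : G, finite_state (fun w => phi D c tr w g).

Section Power.
Variables (G : grp) (s : nat).
Definition pcar := 'I_s -> G.
Definition pmul (a b : pcar) : pcar := fun i => gmul (a i) (b i).
Definition pone : pcar := fun _ => gone G.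
Definition pinv (a : pcar) : pcar := fun i => ginv (a i).
Lemma pmulA x y z : pmul x (pmul y z) = pmul (pmul x y) z.
Proof. apply: functional_extensionality => i; exact: gmulA. Qed.
Lemma pmul1 x : pmul pone x = x.
Proof. apply: functional_extensionality => i; exact: gmul1. Qed.
Lemma pmulg1 x : pmul x pone = x.
Proof. apply: functional_extensionality => i; exact: gmulg1. Qed.
Lemma pmulV x : pmul (pinv x) x = pone.
Proof. apply: functional_extensionality => i; exact: gmulV. Qed.
Lemma pmulgV x : pmul x (pinv x) = pone.
Proof. apply: functional_extensionality => i; exact: gmulgV. Qed.
Definition gpow : grp := Grp pmulA pmul1 pmulg1 pmulV pmulgV.
End Power.

Definition addI (s : nat) : 'I_s -> 'I_s -> 'I_s :=
  match s return 'I_s -> 'I_s -> 'I_s with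
  | 0 => fun i _ => i
  | n.+1 => fun i j => inord ((i + j) %% n.+1)
  end.
Definition predI (s : nat) : 'I_s -> 'I_s :=
  match s return 'I_s -> 'I_s with
  | 0 => fun i => i
  | n.+1 => fun k => inord ((k + n) %% n.+1)
  end.

Section TheData.
Variables (G : grp) (s m : nat) (H : G -> Prop) (f : 'I_s -> G -> G).

Definition data0 : data G := @Data G s (fun _ => m) (fun _ => H) f.

Definition Hpow : gpow G s -> Prop := fun h => forall k, H (h k).

(* rho_j (h_1..h_s) = (h_1^(f_j), h_2^(f_(j+1)), ..., h_s^(f_(j+s-1)));
   0-based: component k gets f_(j+k mod s) *)
Definition rhoj (j : 'I_s) (h : gpow G s) : gpow G s :=
  fun k => f (addI j k) (h k).
Definition rho (h : gpow G s) : gpow G s := fun k => f k (h k).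
Definition tau (g : gpow G s) : gpow G s := fun k => g (predI k).

Definition data1 : data (gpow G s) :=
  @Data (gpow G s) s (fun _ => m ^ s) (fun _ => Hpow) rhoj.

Definition data2 : data (gpow G s) :=
  @Data (gpow G s) 2
    (fun i => if i == ord0 then m ^ s else 1)
    (fun i => if i == ord0 then Hpow else (fun _ => True))
    (fun i => if i == ord0 then rho else tau).
End TheData.

(* Take as letters of the tree of G^s the s-tuples of letters of the tree of G
   (the k-th entry in the component prescribed for coordinate k), plus, for the
   second datum, one letter whose transversal element is 1.  Then g^phi acts
   coordinatewise: coset representatives and sections are computed coordinate by
   coordinate in G, so every coordinate of a section of g is a section of some
   coordinate g_k', and the action of g depends only on the tuple of the
   (g_k)^phi.  Hence the states of g^phi are controlled by s-tuples drawn from the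
   finitely many states of the (g_k')^phi.  For simplicity, the projection of an
   F-core K on a coordinate is a normal subgroup of G contained in H; it is
   invariant under every f_i, since rho_j puts f_(j+k) on coordinate k, resp.
   since the cyclic shift tau carries each coordinate of K to every other one;
   so it is trivial. *)

From Pilot Require Import Defs.
From Stdlib Require Import ClassicalEpsilon FunctionalExtensionality.
From mathcomp Require Import all_boot.
Set Implicit Arguments. Unset Strict Implicit. Unset Printing Implicit Defensive.

Lemma asbE (P : Prop) : asb P = true <-> P.
Proof. by rewrite /asb; case: excluded_middle_informative. Qed.

Lemma ginv1 (G : grp) : ginv (gone G) = gone G.
Proof. by rewrite -{1}(gmul1 (ginv (gone G))) gmulgV. Qed.

Section TreeMap.
Variables (G : grp) (D : data G) (M : nat) (c : 'I_M -> 'I_(dn D)) (tr : 'I_M -> G).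

Definition gphi (g : G) : seq 'I_M -> seq 'I_M := fun w => phi D c tr w g.

Local Notation cosrep := (@Defs.cosrep G D M c tr).

Definition sect (x : 'I_M) (g : G) : G :=
  df D (c x) (gmul (gmul (tr x) g) (ginv (tr (cosrep x g)))).

Definition sects (u : seq 'I_M) (g : G) : G := foldl (fun g x => sect x g) g u.

Lemma sects_cat u v g : sects (u ++ v) g = sects v (sects u g).
Proof. exact: foldl_cat. Qed.

Lemma sects_rcons u x g : sects (rcons u x) g = sect x (sects u g).
Proof. exact: foldl_rcons. Qed.

Lemma size_phi u g : size (phi D c tr u g) = size u.
Proof. by elim: u g => [|x u IH] g //=; rewrite IH. Qed.

Lemma phi_cat u w g : phi D c tr (u ++ w) g = phi D c tr u g ++ phi D c tr w (sects u g).
Proof. by elim: u g => [|x u IH] g //=; rewrite IH. Qed.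

Lemma state_gphi g u : state (gphi g) u = gphi (sects u g).
Proof.
apply: functional_extensionality => w.
by rewrite /state /gphi phi_cat -(size_phi u g) drop_size_cat.
Qed.

Lemma cosrep_gphi x a b : gphi a = gphi b -> cosrep x a = cosrep x b.
Proof. by move/(congr1 (fun F => F [:: x])) => [->]. Qed.

Lemma sect_gphi x a b : gphi a = gphi b -> gphi (sect x a) = gphi (sect x b).
Proof.
move=> Eab; apply: functional_extensionality => w; rewrite /gphi /sect.
by have [_ ->] := congr1 (fun F => F (x :: w)) Eab.
Qed.

Lemma phi_congr (E : G -> G -> Prop) :
  (forall x a b, E a b -> cosrep x a = cosrep x b /\ E (sect x a) (sect x b)) ->
  forall a b, E a b -> gphi a = gphi b.
Proof.
move=> Ecompat a b Eab; apply: functional_extensionality => w; rewrite /gphi.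
elim: w a b Eab => [|x w IH] a b Eab //=.
have [Ecos Esect] := Ecompat x a b Eab.
by congr cons; [exact: Ecos | exact: IH].
Qed.

Lemma transversal_ok_enum (T : finType) (cT : T -> 'I_(dn D)) (trT : T -> G) :
  (forall i, #|[pred x | cT x == i]| = dm D i) ->
  (forall i g, exists! x, cT x = i /\ dH D i (gmul g (ginv (trT x)))) ->
  transversal_ok D (fun y : 'I_#|T| => cT (enum_val y)) (fun y => trT (enum_val y)).
Proof.
move=> card_cT cosetT; split=> [i | i g].
  rewrite -(card_cT i) -(card_image enum_val_inj); apply: eq_card => x.
  apply/imageP/idP => [[y Ey ->] // | Ex].
  by exists (enum_rank x); rewrite ?inE enum_rankK.
have [x [Px Ux]] := cosetT i g; exists (enum_rank x); split; first by rewrite enum_rankK.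
by move=> y /Ux ->; rewrite enum_valK.
Qed.

Hypothesis Htr : transversal_ok D c tr.

Lemma cosrepP x g :
  c (cosrep x g) = c x /\ dH D (c x) (gmul (gmul (tr x) g) (ginv (tr (cosrep x g)))).
Proof.
have [z [[cz Hz] _]] := proj2 Htr (c x) (gmul (tr x) g).
rewrite /Defs.cosrep; case: pickP => [y /andP [/eqP cy /asbE Hy] // | /(_ z)].
by rewrite cz eqxx (proj2 (asbE _) Hz).
Qed.

Lemma cosrep_unique x g y :
  c y = c x -> dH D (c x) (gmul (gmul (tr x) g) (ginv (tr y))) -> cosrep x g = y.
Proof.
move=> cy Hy; have [z [_ Uz]] := proj2 Htr (c x) (gmul (tr x) g).
by rewrite -(Uz y) ?(Uz (cosrep x g)) //; apply: cosrepP.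
Qed.

Lemma index_transversal i : Defs.index (dH D i) (dm D i).
Proof.
pose A := [pred y | c y == i].
have cardA : #|A| = dm D i by rewrite (proj1 Htr).
exists (fun x => tr (enum_val (cast_ord (esym cardA) x))) => g.
have [z [[cz Hz] Uz]] := proj2 Htr i g.
have Az : z \in A by rewrite inE cz.
exists (cast_ord cardA (enum_rank_in Az z)); split.
  by rewrite cast_ordK enum_rankK_in.
move=> x Hx; apply: (can_inj (cast_ordKV cardA)); rewrite cast_ordK.
have /eqP cx : enum_val (cast_ord (esym cardA) x) \in A by apply: enum_valP.
have Ez : z = enum_val (cast_ord (esym cardA) x) by apply: Uz.
by rewrite -[cast_ord _ x](enum_valK_in Az) -Ez.
Qed.
End TreeMap.

Arguments gphi {G} D {M} c tr g.
Arguments sect {G} D {M} c tr x g.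
Arguments sects {G} D {M} c tr u g.

Definition finite_set (T : Type) (P : T -> Prop) :=
  exists (I : finType) (L : I -> T), forall x, P x -> exists i, x = L i.

Lemma finite_stateP (A : Type) (alpha : seq A -> seq A) :
  finite_state alpha <-> finite_set (fun F => exists u, F = state alpha u).
Proof.
split=> [[n [L EL]] | [I [L EL]]].
  exists ('I_n : finType), L => _ [u ->]; have [k ->] := EL u; by exists k.
exists #|I|, (fun k => L (enum_val k)) => u.
have [i ->] := EL _ (ex_intro _ u erefl); by exists (enum_rank i); rewrite enum_rankK.
Qed.

Lemma finite_set_sub (T : Type) (P Q : T -> Prop) :
  (forall x, P x -> Q x) -> finite_set Q -> finite_set P.
Proof. by move=> PQ [I [L EL]]; exists I, L => x /PQ /EL. Qed.

Lemma finite_set_bigcup (T : Type) (J : finType) (P : J -> T -> Prop) :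
  (forall j, finite_set (P j)) -> finite_set (fun x => exists j, P j x).
Proof.
move=> finP.
have choiceP j : {I : finType & {L : I -> T | forall x, P j x -> exists i, x = L i}}.
  have /constructive_indefinite_description [I finI] := finP j.
  by exists I; apply: constructive_indefinite_description.
pose I j := projT1 (choiceP j).
exists ({j : J & I j} : finType), (fun u => sval (projT2 (choiceP (tag u))) (tagged u)).
by move=> x [j /(svalP (projT2 (choiceP j))) [i ->]]; exists (Tagged I i).
Qed.

Lemma finite_set_ffun (T : Type) (J : finType) (P : T -> Prop) :
  finite_set P -> finite_set (fun p : J -> T => forall j, P (p j)).
Proof.
move=> [I [L EL]].
exists ({ffun J -> I} : finType), (fun (x : {ffun J -> I}) j => L (x j)) => p Pp.
have /fin_all_exists [x Ex] : forall j, exists i, p j = L i by move=> j; apply: EL.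
by exists [ffun j => x j]; apply: functional_extensionality => j; rewrite ffunE.
Qed.

Lemma finite_set_factor (T U V : Type) (S : T -> Prop) (q : T -> U) (F : T -> V) :
  inhabited T -> (forall x y, q x = q y -> F x = F y) ->
  finite_set (fun z => exists x, S x /\ z = q x) ->
  finite_set (fun v => exists x, S x /\ v = F x).
Proof.
move=> inhT qF [I [L EL]].
exists I, (fun i => F (epsilon inhT (fun x => q x = L i))) => _ [x [Sx ->]].
have [i Ei] := EL _ (ex_intro _ x (conj Sx erefl)); exists i; apply: qF.
by rewrite (epsilon_spec inhT (fun y => q y = L i)) //; exists x.
Qed.

Section FiniteStatePower.
Variables (G : grp) (s : nat).
Variables (D0 : data G) (M0 : nat) (c0 : 'I_M0 -> 'I_(dn D0)) (tr0 : 'I_M0 -> G).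
Variables (D : data (gpow G s)) (M : nat) (c : 'I_M -> 'I_(dn D)) (tr : 'I_M -> gpow G s).
Local Notation gphi0 := (gphi D0 c0 tr0).

Hypothesis sect_coord :
  forall x h k, exists k' u0, sect D c tr x h k = sects D0 c0 tr0 u0 (h k').
Hypothesis sect_congr : forall x h h', (forall k, gphi0 (h k) = gphi0 (h' k)) ->
  @cosrep _ D _ c tr x h = @cosrep _ D _ c tr x h' /\
  forall k, gphi0 (sect D c tr x h k) = gphi0 (sect D c tr x h' k).

Lemma sects_coord u g k : exists k' u0, sects D c tr u g k = sects D0 c0 tr0 u0 (g k').
Proof.
elim/last_ind: u k => [|u x IH] k; first by exists k, [::].
rewrite sects_rcons; have [k1 [u1 ->]] := sect_coord x (sects D c tr u g) k.
have [k' [u0 ->]] := IH k1; exists k', (u0 ++ u1); exact/esym/sects_cat.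
Qed.

Lemma finite_state_power :
  (forall g0, finite_state (gphi0 g0)) -> forall g, finite_state (gphi D c tr g).
Proof.
move=> fs0 g; apply/finite_stateP.
pose S h := exists u, h = sects D c tr u g.
apply: (@finite_set_sub _ _ (fun F => exists h, S h /\ F = gphi D c tr h)).
  by move=> _ [u ->]; exists (sects D c tr u g); rewrite state_gphi; split => //; exists u.
apply: (finite_set_factor (q := fun h k => gphi0 (h k))).
- exact: inhabits (fun _ => gone G).
- move=> h h' Ehh.
  apply: (phi_congr (E := fun a b : gpow G s => forall k, gphi0 (a k) = gphi0 (b k))).
    by move=> x a b /sect_congr.
  by move=> k; rewrite (congr1 (fun p => p k) Ehh).
apply: (@finite_set_sub _ _ (fun p => forall k, exists k' u0, p k = state (gphi0 (g k')) u0)).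
  move=> _ [h [[u ->] ->]] k; have [k' [u0 ->]] := sects_coord u g k.
  by exists k', u0; rewrite state_gphi.
apply: (@finite_set_ffun _ _ (fun F => exists k' u0, F = state (gphi0 (g k')) u0)).
apply: (@finite_set_bigcup _ _ (fun k' F => exists u0, F = state (gphi0 (g k')) u0)) => k'.
exact/finite_stateP/fs0.
Qed.
End FiniteStatePower.

Lemma card_tag (I : finType) (T_ : I -> finType) i :
  #|[pred u : {i : I & T_ i} | tag u == i]| = #|T_ i|.
Proof.
rewrite -(card_image (@eq_from_Tagged _ T_ i)); apply: eq_card => u.
apply/idP/imageP => [|[x _ ->]]; rewrite inE //=.
by case: u => j x /= /eqP Eji; subst j; exists x.
Qed.

Lemma tag_existsU (I : Type) (T_ : I -> Type) (P : forall i, T_ i -> Prop) i :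
  (exists! x : T_ i, P i x) -> exists! u : {i : I & T_ i}, tag u = i /\ P (tag u) (tagged u).
Proof.
move=> [x [Px Ux]]; exists (Tagged T_ x); split=> // -[j y] /= [Eji Py]; subst j.
by rewrite (Ux y).
Qed.

Lemma tagged_val_inj (I X : Type) (P : I -> pred X) (u v : {i : I & {x : X | P i x}}) :
  tag u = tag v -> val (tagged u) = val (tagged v) -> u = v.
Proof. by case: u v => [i x] [j y] /= Eij; subst j => /val_inj ->. Qed.

Lemma Hpow_subgroup (G : grp) (s : nat) (H : G -> Prop) :
  is_subgroup H -> is_subgroup (Hpow H : gpow G s -> Prop).
Proof.
move=> [H1 [HM HV]]; split=> [k | ]; first exact: H1.
by split=> [a b Ha Hb k | a Ha k]; [apply: HM | apply: HV].
Qed.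

Section PowerTransversals.
Variables (G : grp) (s m : nat) (H : G -> Prop) (f : 'I_s -> G -> G).
Variables (M0 : nat) (c0 : 'I_M0 -> 'I_s) (tr0 : 'I_M0 -> G).
Hypothesis tro : transversal_ok (data0 m H f) c0 tr0.

Local Notation D0 := (data0 m H f).
Local Notation GS := (gpow G s).
Local Notation cosrep0 := (@cosrep G D0 M0 c0 tr0).
Local Notation sect0 := (sect D0 c0 tr0).
Local Notation gphi0 := (gphi D0 c0 tr0).

(* The s-tuples of letters of the tree of G with k-th entry in component
   [sigma k]; they index a right transversal of H^s in G^s. *)
Local Notation ltuple sigma := {x : {ffun 'I_s -> 'I_M0} | [forall k, c0 (x k) == sigma k]}.

Definition ltuple_tr sigma (x : ltuple sigma) : GS := fun k => tr0 (val x k).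

Lemma ltuple_comp sigma (x : ltuple sigma) k : c0 (val x k) = sigma k.
Proof. by have /forallP/(_ k)/eqP := valP x. Qed.

Lemma card_ltuple sigma : #|{: ltuple sigma}| = m ^ s.
Proof.
pose F k := [pred y | c0 y == sigma k].
transitivity #|(family F : simpl_pred {ffun 'I_s -> 'I_M0})|.
  by rewrite card_sig; apply: eq_card => x; rewrite !inE.
rewrite card_family /image_mem (eq_map (g := fun=> m)) => [|k]; last exact: (proj1 tro).
by rewrite -[s in m ^ s]card_ord cardE; elim: (enum _) => //= _ l ->; rewrite expnS.
Qed.

Lemma ltuple_coset sigma (g : GS) : exists! x : ltuple sigma, Hpow H (gmul g (ginv (ltuple_tr x))).
Proof.
have /fin_all_exists [x0 Ex0] k : exists y, c0 y = sigma k /\ H (gmul (g k) (ginv (tr0 y))).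
  by have [y [Py _]] := proj2 tro (sigma k) (g k); exists y.
have x0P : [forall k, c0 ([ffun k => x0 k] k) == sigma k].
  by apply/forallP => k; rewrite ffunE (proj1 (Ex0 k)).
exists (exist _ [ffun k => x0 k] x0P); split=> [k | x Hx].
  by rewrite /= /pmul /pinv /ltuple_tr /= ffunE; exact: (proj2 (Ex0 k)).
apply/val_inj/ffunP => k /=; rewrite ffunE.
have [y [_ Uy]] := proj2 tro (sigma k) (g k).
by rewrite -(Uy (x0 k)) // (Uy (val x k)) //; split; [exact: ltuple_comp | exact: Hx].
Qed.

Lemma cosrep0_coord (x y : 'I_s -> 'I_M0) (h : GS) :
  (forall k, c0 (y k) = c0 (x k)) ->
  (forall k, H (gmul (gmul (tr0 (x k)) (h k)) (ginv (tr0 (y k))))) ->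
  forall k, y k = cosrep0 (x k) (h k).
Proof. by move=> cxy Hxy k; apply/esym/(cosrep_unique tro). Qed.

Local Notation D1 := (data1 m H f).
Local Notation letters1 := {i : 'I_s & ltuple (addI i)}.
Definition c1 (y : 'I_#|{: letters1}|) : 'I_s := tag (enum_val y).
Definition tr1 (y : 'I_#|{: letters1}|) : GS := ltuple_tr (tagged (enum_val y)).
Local Notation cosrep1 := (@cosrep GS D1 _ c1 tr1).
Local Notation sect1 := (sect D1 c1 tr1).

Lemma transversal1 : transversal_ok D1 c1 tr1.
Proof.
apply: (@transversal_ok_enum _ D1 letters1 tag (fun u => ltuple_tr (tagged u))) => [i | i g].
  by rewrite card_tag card_ltuple.
apply: (@tag_existsU _ _ (fun i (x : ltuple (addI i)) => Hpow H (gmul g (ginv (ltuple_tr x))))).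
exact: ltuple_coset.
Qed.

Lemma cosrep1E l h :
  tag (enum_val (cosrep1 l h)) = tag (enum_val l) /\
  forall k, val (tagged (enum_val (cosrep1 l h))) k =
            cosrep0 (val (tagged (enum_val l)) k) (h k).
Proof.
have [comp1 coset1] := cosrepP transversal1 l h; split => //.
by apply: cosrep0_coord coset1 => k; rewrite !ltuple_comp; congr addI.
Qed.

Lemma sect1E l h k : sect1 l h k = sect0 (val (tagged (enum_val l)) k) (h k).
Proof.
have [comp1 coord1] := cosrep1E l h.
by rewrite /sect /= /rhoj /pmul /pinv /tr1 /ltuple_tr coord1 ltuple_comp.
Qed.

Lemma sect1_congr l h h' : (forall k, gphi0 (h k) = gphi0 (h' k)) ->
  cosrep1 l h = cosrep1 l h' /\ forall k, gphi0 (sect1 l h k) = gphi0 (sect1 l h' k).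
Proof.
move=> Ehh; split=> [|k]; last by rewrite !sect1E; apply: sect_gphi.
have [comp1 coord1] := cosrep1E l h; have [comp1' coord1'] := cosrep1E l h'.
apply/enum_val_inj/tagged_val_inj; first by rewrite comp1 comp1'.
by apply/ffunP => k; rewrite coord1 coord1'; apply: cosrep_gphi.
Qed.

Lemma finite_state_wrt1 :
  (forall g0, finite_state (gphi0 g0)) -> finite_state_wrt D1.
Proof.
move=> fs0; exists #|{: letters1}|, c1, tr1; split; first exact: transversal1.
apply: finite_state_power fs0 => [l h k | l h h' /sect1_congr //].
by exists k, [:: val (tagged (enum_val l)) k]; rewrite sect1E.
Qed.

Local Notation D2 := (data2 m H f).
Local Notation letters2 := (option (ltuple id)).
Definition comp2_of (o : letters2) : 'I_2 := if o is Some _ then ord0 else ord_max.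
Definition tr2_of (o : letters2) : GS := if o is Some x then ltuple_tr x else gone GS.
Definition c2 (y : 'I_#|{: letters2}|) : 'I_2 := comp2_of (enum_val y).
Definition tr2 (y : 'I_#|{: letters2}|) : GS := tr2_of (enum_val y).
Local Notation cosrep2 := (@cosrep GS D2 _ c2 tr2).
Local Notation sect2 := (sect D2 c2 tr2).

Lemma transversal2 : transversal_ok D2 c2 tr2.
Proof.
apply: (@transversal_ok_enum _ D2 letters2 comp2_of tr2_of) => -[[|[|//]] i2] /=.
- rewrite -(card_ltuple id) -[RHS]/(_.+1.-1) -card_option -(cardC1 None).
  by apply: eq_card => -[x|].
- by apply: (@eq_card1 _ None) => -[x|].
- move=> g; have [x [Hx Ux]] := ltuple_coset id g.
  exists (Some x); split; first by split=> //; apply: val_inj.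
  by case=> [x' [_ /Ux ->] | [/(congr1 val)]].
- move=> g; exists None; split; first by split=> //; apply: val_inj.
  by case=> [x' [/(congr1 val)] | ].
Qed.

Lemma cosrep2_Some l x h : enum_val l = Some x ->
  exists2 x', enum_val (cosrep2 l h) = Some x' & forall k, val x' k = cosrep0 (val x k) (h k).
Proof.
move=> El; have [comp2l coset2] := cosrepP transversal2 l h.
move: comp2l coset2; rewrite /c2 /tr2 El.
case: (enum_val (cosrep2 l h)) => [x' _ coset2 | /(congr1 val) //]; exists x' => //.
by apply: cosrep0_coord coset2 => k; rewrite !ltuple_comp.
Qed.

Lemma cosrep2_None l h : enum_val l = None -> cosrep2 l h = l.
Proof.
move=> El; have [comp2l _] := cosrepP transversal2 l h; apply: enum_val_inj.
by move: comp2l; rewrite /c2 El; case: (enum_val _) => [x' /(congr1 val) |].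
Qed.

Lemma sect2_Some l x h k : enum_val l = Some x -> sect2 l h k = sect0 (val x k) (h k).
Proof.
move=> El; have [x' Ex' coord2] := cosrep2_Some h El.
by rewrite /sect /c2 /tr2 El Ex' /= /rho /pmul /pinv /ltuple_tr coord2 ltuple_comp.
Qed.

Lemma sect2_None l h k : enum_val l = None -> sect2 l h k = h (Defs.predI k).
Proof.
move=> El; rewrite /sect (cosrep2_None h El) /c2 /tr2 El /= /tau /pmul /pinv.
by rewrite ginv1 gmulg1 gmul1.
Qed.

Lemma sect2_congr l h h' : (forall k, gphi0 (h k) = gphi0 (h' k)) ->
  cosrep2 l h = cosrep2 l h' /\ forall k, gphi0 (sect2 l h k) = gphi0 (sect2 l h' k).
Proof.
move=> Ehh; case El: (enum_val l) => [x|]; last first.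
  by split=> [|k]; rewrite ?cosrep2_None // !(sect2_None _ _ El).
split=> [|k]; last by rewrite !(sect2_Some _ _ El); apply: sect_gphi.
have [x1 E1 coord1] := cosrep2_Some h El; have [x2 E2 coord2] := cosrep2_Some h' El.
apply: enum_val_inj; rewrite E1 E2; congr Some; apply/val_inj/ffunP => k.
by rewrite coord1 coord2; apply: cosrep_gphi.
Qed.

Lemma finite_state_wrt2 :
  (forall g0, finite_state (gphi0 g0)) -> finite_state_wrt D2.
Proof.
move=> fs0; exists #|{: letters2}|, c2, tr2; split; first exact: transversal2.
apply: finite_state_power fs0 => [l h k | l h h' /sect2_congr //].
case El: (enum_val l) => [x|].
  by exists k, [:: val x k]; rewrite (sect2_Some _ _ El).
by exists (Defs.predI k), [::]; rewrite (sect2_None _ _ El).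
Qed.

Hypothesis Hsub : is_subgroup H.
Hypothesis Hhom : forall i, hom_on H (f i).

Lemma is_data1 : is_data D1.
Proof.
move=> i; split; first exact: Hpow_subgroup.
split; first exact: index_transversal transversal1 i.
by move=> a b Ha Hb; apply: functional_extensionality => k; apply: Hhom.
Qed.

Lemma is_data2 : is_data D2.
Proof.
move=> i; split; last split.
- by case: i => -[|[|//]] i2 /=; [exact: Hpow_subgroup | split].
- exact: index_transversal transversal2 i.
case: i => -[|[|//]] i2 //= a b Ha Hb.
by apply: functional_extensionality => k; apply: Hhom.
Qed.
End PowerTransversals.

Section Simplicity.
Variables (G : grp) (n m : nat) (H : G -> Prop) (f : 'I_n.+1 -> G -> G).
Hypothesis simple0 : simple (data0 m H f).
Local Notation GS := (gpow G n.+1).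

Definition coord_set (K : GS -> Prop) (k : 'I_n.+1) : G -> Prop :=
  fun x => exists2 a, K a & a k = x.

Lemma coord_subgroup K k : is_subgroup K -> is_subgroup (coord_set K k).
Proof.
move=> [K1 [KM KV]]; split; first by exists (gone GS).
split=> [_ _ [a Ka <-] [b Kb <-] | _ [a Ka <-]].
  by exists (pmul a b); first exact: KM.
by exists (pinv a); first exact: KV.
Qed.

Lemma coord_normal K k : normal K -> normal (coord_set K k).
Proof.
move=> Kn _ g [a Ka <-].
pose e : GS := fun i => if i == k then g else gone G.
by exists (gmul (gmul (ginv e) a) e); [exact: Kn | rewrite /= /pmul /pinv /e eqxx].
Qed.

Lemma coord_trivial K k : is_subgroup K -> normal K -> (forall a, K a -> Hpow H a) ->
  (forall i x, coord_set K k x -> coord_set K k (f i x)) ->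
  forall x, coord_set K k x -> x = gone G.
Proof.
move=> Ks Kn KH Kf; apply: (simple0 (coord_subgroup k Ks) (coord_normal Kn)) => //.
by move=> i _ [a /KH Ha <-].
Qed.

Lemma addI_surj (c i : 'I_n.+1) : exists j : 'I_n.+1, addI j c = i.
Proof.
exists (inord ((i + (n.+1 - c)) %% n.+1)); apply: val_inj => /=.
rewrite !inordK ?ltn_pmod // modnDml -addnA subnK; last exact: ltnW (ltn_ord c).
by rewrite modnDr modn_small.
Qed.

Lemma iter_predI t (c : 'I_n.+1) : iter t (@Defs.predI n.+1) c + t = c %[mod n.+1].
Proof.
elim: t => [|t IH] /=; first by rewrite addn0.
by rewrite inordK ?ltn_pmod // modnDml -addnA addnS -addSn addnCA modnDl; exact: IH.
Qed.

Lemma predI_reach (c c' : 'I_n.+1) : exists t, iter t (@Defs.predI n.+1) c = c'.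
Proof.
exists (c + n.+1 - c'); set t := _ - _; apply/ord_inj/eqP.
rewrite -(modn_small (ltn_ord (iter t _ c))) -(modn_small (ltn_ord c')) -(eqn_modDr t).
by rewrite iter_predI /t subnKC ?modnDr // ltnW // ltn_addl.
Qed.

Lemma simple1 : simple (data1 m H f).
Proof.
move=> K Ks Kn KH Kf a Ka; apply: functional_extensionality => k.
apply: (coord_trivial Ks Kn (KH ord0)); last by exists a.
move=> i _ [b Kb <-]; have [j Eji] := addI_surj k i.
by exists (rhoj f j b); [exact: Kf | rewrite /rhoj Eji].
Qed.

Lemma simple2 : simple (data2 m H f).
Proof.
move=> K Ks Kn KH Kf.
have coord_predI c x : coord_set K (Defs.predI c) x -> coord_set K c x.
  by move=> [b Kb <-]; exists (tau b); [exact: (Kf ord_max) | ].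
have coord_all c c' x : coord_set K c x -> coord_set K c' x.
  have [t <-] := predI_reach c' c.
  by elim: t => [|t IH] //= /coord_predI; apply: IH.
move=> a Ka; apply: functional_extensionality => k.
apply: (coord_trivial Ks Kn (KH ord0)); last by exists a.
move=> i x /(coord_all k i) [b Kb <-]; apply: (coord_all i k).
by exists (rho f b); [exact: (Kf ord0) | ].
Qed.
End Simplicity.

Theorem mainTheorem6 (G : grp) (s m : nat) (H : G -> Prop) (f : 'I_s -> G -> G) :
  0 < s ->
  is_data (data0 m H f) ->
  simple (data0 m H f) ->
  finite_state_wrt (data0 m H f) ->
  (is_data (data1 m H f) /\ simple (data1 m H f) /\ finite_state_wrt (data1 m H f)) /\
  (is_data (data2 m H f) /\ simple (data2 m H f) /\ finite_state_wrt (data2 m H f)).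
Proof.
case: s f => [//|n] f _ data0_ok simple0 [M0 [c0 [tr0 [tro fs0]]]].
have Hsub : is_subgroup H := proj1 (data0_ok ord0).
have Hhom i : hom_on H (f i) := proj2 (proj2 (data0_ok i)).
split; split.
- exact: is_data1 tro Hsub Hhom.
- split; [exact: simple1 | exact: finite_state_wrt1 tro fs0].
- exact: is_data2 tro Hsub Hhom.
- split; [exact: simple2 | exact: finite_state_wrt2 tro fs0].
Qed.
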